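(* Let $G$ be a simple graph of order $n$. If $$\mu(G) > -\frac{1}{2}+\sqrt{\left(n-\frac{3}{2}\right)^2+2},$$ then $G$ is Hamilton-connected unless $G=K_{n-1}+e+e'$.
   Context: For a simple graph $G$, $\mu(G)$ denotes the largest eigenvalue (spectral radius) of the adjacency matrix $A(G)$. A graph is Hamilton-connected if every two distinct vertices are joined by a Hamiltonian path (a path containing all vertices). $K_{n-1}+e+e'$ denotes the graph obtained from the complete graph $K_{n-1}$ by adding one new vertex and joining it by two edges $e,e'$ to two vertices of $K_{n-1}$. *)

From HB Require Import structures.
From mathcomp Require Import all_boot all_order fingroup perm all_algebra.
Set Implicit Arguments. Unset Strict Implicit. Unset Printing Implicit Defensive.
Import Order.TTheory GRing.Theory Num.Theory.
Local Open Scope ring_scope.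

Definition simple_graph (n : nat) (e : rel 'I_n) : Prop :=
  symmetric e /\ irreflexive e.

Definition adjmx (R : nzRingType) (n : nat) (e : rel 'I_n) : 'M[R]_n :=
  \matrix_(i, j) (e i j)%:R.

Definition largest_eigenvalue (F : numFieldType) (n : nat) (A : 'M[F]_n)
  (mu : F) : Prop :=
  eigenvalue A mu /\ forall l, eigenvalue A l -> l <= mu.

Definition ham_path (n : nat) (e : rel 'I_n) (u v : 'I_n) (s : seq 'I_n)
  : Prop :=
  [/\ path e u s, last u s = v, uniq (u :: s) & forall x, x \in u :: s].

Definition hamilton_connected (n : nat) (e : rel 'I_n) : Prop :=
  forall u v : 'I_n, u != v -> exists s, ham_path e u v s.

(* K_{n-1} + e + e' on 'I_n: vertices 0..n-2 form a clique, and vertex n-1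
   is joined exactly to vertices 0 and 1. *)
Definition Kn1ee (n : nat) : rel 'I_n := fun i j =>
  (i != j) &&
  (if (i == n.-1 :> nat) then (j < 2)%N
   else if (j == n.-1 :> nat) then (i < 2)%N else true).

Definition isomorphic (n : nat) (e1 e2 : rel 'I_n) : Prop :=
  exists f : {perm 'I_n}, forall x y, e1 x y = e2 (f x) (f y).

From HB Require Import structures.
From mathcomp Require Import all_boot all_order fingroup perm all_algebra.
From mathcomp Require Import zify lra.
Import Order.TTheory GRing.Theory Num.Theory.
Set Implicit Arguments. Unset Strict Implicit. Unset Printing Implicit Defensive.

(* Let x be an eigenvector for mu and u a vertex where |x| is maximal. Whenever
   the row of A^2 - cA at u is nonnegative, comparing u-entries in
   (A^2 - cA) x = (mu^2 - c mu) x gives mu^2 - c mu <= (A^2 1)_u - c d(u).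
   For c = -1 this bounds mu^2 + mu by 2|E|, so the hypothesis forces
   |E| >= C(n-1,2) + 2. With one more edge, any two non-adjacent vertices have
   degree sum at least n + 1, and G is Hamilton-connected by a closure
   argument: a Hamiltonian path of G + xy through xy is rerouted along a
   crossing pair of neighbours of x and y. If |E| = C(n-1,2) + 2 and some
   vertex has degree at most 2, then G = K_{n-1}+e+e'. Otherwise the minimum
   degree is at least 3, so every edge at u lies in a triangle (in two if u is
   universal), and the bound for c = 1 (resp. c = 2) contradicts the
   hypothesis. *)

Lemma sum1_ord n : \sum_(i < n) 1 = n.
Proof. by rewrite sum_nat_const card_ord muln1. Qed.

Lemma sum1_neq n (x : 'I_n) : \sum_(i < n | i != x) 1 = n.-1.
Proof. by have := sum1_ord n; rewrite (bigD1 x) //= => h; rewrite -[in RHS]h add1n. Qed.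

(* [bigD1] at fixed shapes, so that [lia] sees syntactically equal sums. *)
Lemma sum_ordD1 n (F : 'I_n -> nat) x :
  \sum_(i < n) F i = F x + \sum_(i < n | i != x) F i.
Proof. exact: bigD1. Qed.

Lemma sum_ordD1P n (P : pred 'I_n) (F : 'I_n -> nat) x : P x ->
  \sum_(i < n | P i) F i = F x + \sum_(i < n | P i && (i != x)) F i.
Proof. exact: bigD1. Qed.

Lemma bigD2 n (F : 'I_n -> nat) a b : a != b ->
  \sum_(i < n) F i = F a + F b + \sum_(i < n | (i != a) && (i != b)) F i.
Proof. by move=> ab; rewrite (bigD1 a) // (bigD1 b) 1?eq_sym //= addnA. Qed.

Lemma sum1_neq2 n (a b : 'I_n) : a != b ->
  \sum_(i < n | (i != a) && (i != b)) 1 = n - 2.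
Proof. by move=> ab; have := bigD2 (fun _ => 1) ab; rewrite sum1_ord; lia. Qed.

Lemma sum_nat_const_pred n (P : pred 'I_n) c :
  \sum_(i < n | P i) c = (\sum_(i < n | P i) 1) * c.
Proof. by rewrite big_distrl /=; apply: eq_bigr => *; rewrite mul1n. Qed.

Section Degrees.

Variables (n : nat) (e : rel 'I_n).

Definition deg (i : 'I_n) : nat := \sum_(j < n) e i j.
Definition degsum : nat := \sum_(i < n) deg i.
Definition codeg (i j : 'I_n) : nat := \sum_(k < n) e i k * e k j.
Definition nbr_degsum (i : 'I_n) : nat := \sum_(k < n) e i k * deg k.

Lemma degsum_ge c : (forall k, c <= deg k) -> n * c <= degsum.
Proof.
move=> H; rewrite -[X in X * _](sum1_ord n) big_distrl /=.
by apply: leq_sum => i _; rewrite mul1n.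
Qed.

Lemma deg_add_deg_le_codeg a b : symmetric e -> deg a + deg b <= n + codeg a b.
Proof.
move=> sym; rewrite -[n]sum1_ord -!big_split /=; apply: leq_sum => k _.
by rewrite (sym k b); case: (e a k); case: (e b k).
Qed.

Lemma sum_codeg u : \sum_(w < n) codeg u w = nbr_degsum u.
Proof. by rewrite /codeg exchange_big; apply: eq_bigr => k _; rewrite /deg big_distrr. Qed.

Hypothesis e_irr : irreflexive e.

Lemma sum_adj_lt (P : pred 'I_n) i : P i -> \sum_(j < n | P j) e i j < \sum_(j < n | P j) 1.
Proof.
move=> Pi; rewrite (bigD1 i) //= e_irr add0n [X in _ < X](bigD1 i) //= add1n ltnS.
by apply: leq_sum => j _; case: (e i j).
Qed.

Lemma deg_le_pred i : deg i <= n.-1.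
Proof. by have := sum_adj_lt (P := xpredT) (erefl (xpredT i)); rewrite sum1_ord /deg; lia. Qed.

Lemma deg_nonadj_le u k : k != u -> ~~ e u k -> deg u + 2 <= n.
Proof.
move=> ku nuk.
have hd : deg u = \sum_(j < n | j != k) e u j by rewrite /deg (bigD1 k) //= (negbTE nuk).
have := sum_adj_lt (P := fun j => j != k) (i := u); rewrite eq_sym ku sum1_neq -hd => /(_ isT).
have := ltn_ord k; lia.
Qed.

Lemma degsum_le : degsum <= n * n.-1.
Proof.
rewrite /degsum -[X in X * _](sum1_ord n) big_distrl /=.
by apply: leq_sum => i _; rewrite mul1n deg_le_pred.
Qed.

Lemma nbr_degsum_add_deg_le u : nbr_degsum u + deg u <= degsum.
Proof.
rewrite /nbr_degsum /degsum (bigD1 u) //= [X in _ <= X](bigD1 u) //= e_irr add0n addnC.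
by rewrite leq_add2l; apply: leq_sum => k _; case: (e u k); rewrite ?mul1n ?mul0n.
Qed.

Lemma nbr_degsum_universal u : (forall k, k != u -> e u k) -> nbr_degsum u + deg u = degsum.
Proof.
move=> H; rewrite /nbr_degsum /degsum (bigD1 u) //= [in RHS](bigD1 u) //= e_irr add0n addnC.
by congr (_ + _); apply: eq_bigr => k ku; rewrite H ?mul1n.
Qed.

Lemma nbr_degsum_nonuniversal u : (forall k, 3 <= deg k) ->
  nbr_degsum u + deg u + 3 * (n.-1 - deg u) <= degsum.
Proof.
move=> H.
have nonadj : \sum_(k < n) ((k != u) && ~~ e u k : nat) + deg u = n.-1.
  rewrite -(sum1_neq u) /deg [X in X + _](bigD1 u) //= eqxx add0n.
  rewrite [X in _ + X](bigD1 u) //= e_irr add0n -big_split /=.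
  by apply: eq_bigr => k ku; rewrite ku; case: (e u k).
suff : nbr_degsum u + deg u + 3 * \sum_(k < n) ((k != u) && ~~ e u k : nat) <= degsum by lia.
rewrite /nbr_degsum /degsum big_distrr (bigD1 u) //= e_irr add0n.
rewrite [X in _ + X](bigD1 u) //= eqxx muln0 add0n [X in _ <= X](bigD1 u) //=.
rewrite [_ + deg u]addnC -addnA leq_add2l -big_split /=; apply: leq_sum => k ku.
by rewrite ku; case: (e u k); rewrite /= ?mul1n ?addn0 ?mul0n ?muln1 ?add0n ?H.
Qed.

Hypothesis e_sym : symmetric e.

Lemma sum_adj_col i : \sum_(j < n) e j i = deg i.
Proof. by apply: eq_bigr => j _; rewrite e_sym. Qed.

Lemma codeg_universal u w : (forall k, k != u -> e u k) -> codeg u w + e u w = deg w.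
Proof.
move=> H; rewrite -sum_adj_col /codeg (bigD1 u) //= [in RHS](bigD1 u) //= e_irr add0n addnC.
by congr (_ + _); apply: eq_bigr => k ku; rewrite H ?mul1n.
Qed.

Lemma degsum_even : ~~ odd degsum.
Proof.
suff -> : degsum = (\sum_(i < n) \sum_(j < n) (e i j && (i < j) : nat)).*2 by rewrite odd_double.
have split_edge i j : (e i j : nat) = (e i j && (i < j) : nat) + (e j i && (j < i) : nat).
  rewrite (e_sym j i); case: (ltngtP i j) => [h|h|/val_inj ->]; rewrite ?e_irr //=.
    by rewrite andbT andbF addn0.
  by rewrite andbT andbF.
rewrite -addnn {1}/degsum /deg.
under eq_bigr do under eq_bigr do rewrite split_edge.
under eq_bigr do rewrite big_split /=.
by rewrite big_split /=; congr (_ + _); exact: exchange_big.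
Qed.

Lemma deg_le_adj_add x i : i != x -> deg i <= e i x + (n - 2).
Proof.
move=> ix; rewrite /deg (sum_ordD1 _ x) leq_add2l -ltnS.
apply: leq_trans (sum_adj_lt (P := fun j => j != x) ix) _; rewrite /= sum1_neq; lia.
Qed.

Lemma deg_eq_sum_neq x : deg x = \sum_(i < n | i != x) e i x.
Proof. by rewrite -sum_adj_col (bigD1 x) //= e_irr. Qed.

Lemma degsum_vertex_bound x : degsum <= 2 * deg x + (n - 1) * (n - 2).
Proof.
have Hx := deg_eq_sum_neq x.
rewrite /degsum (sum_ordD1 _ x).
suff : \sum_(i < n | i != x) deg i <= \sum_(i < n | i != x) e i x + (n - 1) * (n - 2) by lia.
have -> : n - 1 = \sum_(i < n | i != x) 1 by rewrite sum1_neq; lia.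
rewrite -sum_nat_const_pred -big_split /=; apply: leq_sum => i ix; exact: deg_le_adj_add.
Qed.

Lemma degsum_vertex_bound_nonedge x a b : a != x -> b != x -> a != b -> ~~ e a b ->
  degsum < 2 * deg x + (n - 1) * (n - 2).
Proof.
move=> ax bx ab nab.
have Ha : deg a < e a x + (n - 2).
  rewrite /deg (sum_ordD1 _ x) (sum_ordD1P _ (P := fun j => j != x) bx) /= (negbTE nab) add0n.
  have := sum_adj_lt (P := fun j => (j != x) && (j != b)) (i := a); rewrite /= ax ab => /(_ isT).
  have := sum1_neq x; rewrite (sum_ordD1P _ (P := fun j => j != x) bx) /=; lia.
have Hx := deg_eq_sum_neq x.
rewrite /degsum (sum_ordD1 _ x).
suff : \sum_(i < n | i != x) deg i < \sum_(i < n | i != x) e i x + (n - 1) * (n - 2) by lia.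
have -> : n - 1 = \sum_(i < n | i != x) 1 by rewrite sum1_neq; lia.
rewrite -sum_nat_const_pred (sum_ordD1P deg (P := fun j => j != x) ax) /=.
rewrite (sum_ordD1P (fun i => (e i x : nat)) (P := fun j => j != x) ax) /=.
rewrite (sum_ordD1P (fun i => n - 2) (P := fun j => j != x) ax) /=.
have : \sum_(i < n | (i != x) && (i != a)) deg i <=
       \sum_(i < n | (i != x) && (i != a)) (e i x + (n - 2)).
  by apply: leq_sum => i /andP[ix _]; exact: deg_le_adj_add.
rewrite big_split /=; lia.
Qed.

Lemma degsum_pair_bound a b : a != b ->
  degsum + 2 * e a b <= 2 * (deg a + deg b) + (n - 2) * (n - 3).
Proof.
move=> ab.
have Ha : deg a = e a b + \sum_(i < n | (i != a) && (i != b)) e i a.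
  by rewrite -sum_adj_col (bigD2 _ ab) e_irr e_sym.
have Hb : deg b = e a b + \sum_(i < n | (i != a) && (i != b)) e i b.
  by rewrite -sum_adj_col (bigD2 _ ab) e_irr addn0.
rewrite /degsum (bigD2 _ ab).
suff : \sum_(i < n | (i != a) && (i != b)) deg i <=
    \sum_(i < n | (i != a) && (i != b)) e i a + \sum_(i < n | (i != a) && (i != b)) e i b
    + (n - 2) * (n - 3) by lia.
rewrite -big_split /= -(sum1_neq2 ab) -sum_nat_const_pred -big_split /=.
apply: leq_sum => i Pi; rewrite /deg (bigD2 _ ab) leq_add2l -ltnS.
by apply: leq_trans (sum_adj_lt Pi) _; rewrite sum1_neq2 //; lia.
Qed.

End Degrees.

Definition consec (T : Type) (s : seq T) : seq (T * T) :=
  if s is a :: t then pairmap pair a t else [::].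

Lemma size_consec (T : Type) (s : seq T) : size (consec s) = (size s).-1.
Proof. by case: s => //= a t; rewrite size_pairmap. Qed.

Lemma count_consec_fst (T : Type) (P : pred T) a t :
  count (fun p => P p.1) (consec (a :: t)) + P (last a t) = count P (a :: t).
Proof. by elim: t a => [|b t IH] a /=; rewrite ?addn0 // -addnA IH. Qed.

Lemma count_consec_snd (T : Type) (P : pred T) a t :
  count (fun p => P p.2) (consec (a :: t)) + P a = count P (a :: t).
Proof.
elim: t a => [|b t IH] a /=; first by rewrite addn0.
by have := IH b; rewrite /= => <-; lia.
Qed.

Lemma mem_consec (T : eqType) (s : seq T) p p' :
  (p, p') \in consec s -> exists l r, s = l ++ p :: p' :: r.
Proof.
case: s => // a t; elim: t a => // b t IH a /=.
rewrite inE => /orP[/eqP [-> ->] | /IH [l [r ->]]]; first by exists [::], t.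
by exists (a :: l), r.
Qed.

Section Sorted.

Variables (T : eqType) (e : rel T).

Lemma sorted_cat_cons s1 z s2 :
  sorted e (s1 ++ z :: s2) = sorted e (rcons s1 z) && path e z s2.
Proof. by case: s1 => [|a s1] //=; rewrite cat_path rcons_path andbA. Qed.

Hypothesis e_sym : symmetric e.

Lemma sorted_rev_sym s : sorted e (rev s) = sorted e s.
Proof. by rewrite rev_sorted; case: s => // a t /=; apply: eq_path => x y; rewrite e_sym. Qed.

(* Reversing the middle block b :: B of a path only breaks its two boundary
   edges; the chords [a -- last b B] and [b -- c] repair them. *)
Lemma two_opt A a b B c C :
  sorted e (rcons A a) -> sorted e (b :: B) -> sorted e (c :: C) ->
  e a (last b B) -> e b c ->
  exists2 q, perm_eq q (rcons A a ++ (b :: B) ++ c :: C) &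
    [/\ sorted e q, forall d, head d q = head d (rcons A a ++ (b :: B) ++ c :: C)
      & forall d, last d q = last d (rcons A a ++ (b :: B) ++ c :: C)].
Proof.
move=> SA SB SC ab bc; exists (rcons A a ++ rev (b :: B) ++ c :: C).
  by rewrite perm_cat2l perm_cat2r perm_rev.
split; last 2 first.
- by case: A {SA}.
- by move=> d; rewrite !last_cat /=.
move: SB SC => /= SB SC.
rewrite cat_rcons sorted_cat_cons SA /= cat_path rev_cons last_rcons /= bc SC andbT.
have -> : path e a (rcons (rev B) b) = sorted e (rev (rcons (b :: B) a)).
  by rewrite rev_rcons rev_cons.
by rewrite sorted_rev_sym /= rcons_path SB andbT e_sym.
Qed.

End Sorted.

Lemma perm_index_enum n (q : seq 'I_n) :
  uniq q -> (forall z, z \in q) -> perm_eq q (index_enum 'I_n).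
Proof.
move=> U C; apply: uniq_perm => //; first exact: index_enum_uniq.
by move=> z; rewrite C mem_index_enum.
Qed.

Lemma count_adj_perm n (e : rel 'I_n) (q : seq 'I_n) a :
  perm_eq q (index_enum 'I_n) -> count (e a) q = deg e a.
Proof.
move=> P; rewrite (seq.permP P) /deg big_mkcond /= -sum1_count big_mkcond /=.
by apply: eq_bigr => j _; case: (e a j).
Qed.

Lemma size_perm_index_enum n (q : seq 'I_n) : perm_eq q (index_enum 'I_n) -> size q = n.
Proof. by move=> P; rewrite -count_predT (seq.permP P) -sum1_count sum1_ord. Qed.

(* Of the n - 2 consecutive pairs (p, p') of the sequence, at least deg x - 1
   have e x p and at least deg y - 1 have e y p', so some pair has both. *)
Lemma crossing_pair n (e : rel 'I_n) (x y : 'I_n) (l1 l2 : seq 'I_n) : irreflexive e ->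
  uniq (rcons l1 x ++ y :: l2) -> (forall z, z \in rcons l1 x ++ y :: l2) ->
  n < deg e x + deg e y ->
  exists p p', [/\ e x p, e y p' & (p, p') \in consec (rcons l1 x) ++ consec (y :: l2)].
Proof.
move=> irr U C dxy; have P := perm_index_enum U C.
pose A := fun p : 'I_n * 'I_n => e x p.1.
pose B := fun p : 'I_n * 'I_n => e y p.2.
have hA1 : count A (consec (rcons l1 x)) = count (e x) (rcons l1 x).
  case: l1 {U C P} => [|a t] /=; first by rewrite irr.
  by have := count_consec_fst (e x) a (rcons t x); rewrite last_rcons irr addn0.
have hB1 : count (e y) (rcons l1 x) <= count B (consec (rcons l1 x)) + 1.
  case: l1 {U C P hA1} => [|a t] /=; first by case: (e y x).
  have := count_consec_snd (e y) a (rcons t x); rewrite /= => <-.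
  by rewrite -/B leq_add2l; case: (e y a).
have hA2 : count (e x) (y :: l2) <= count A (consec (y :: l2)) + 1.
  by have := count_consec_fst (e x) y l2 => <-; rewrite leq_add2l; case: (e x _).
have hB2 : count B (consec (y :: l2)) = count (e y) (y :: l2).
  by have := count_consec_snd (e y) y l2; rewrite irr addn0.
have hx := count_adj_perm e x P; have hy := count_adj_perm e y P.
have hsz := size_perm_index_enum P.
rewrite count_cat in hx; rewrite count_cat in hy.
rewrite size_cat size_rcons [size (y :: l2)]/= in hsz.
have hUI := count_predUI A B (consec (rcons l1 x) ++ consec (y :: l2)).
have hU := count_size (predU A B) (consec (rcons l1 x) ++ consec (y :: l2)).
rewrite !count_cat size_cat !size_consec size_rcons [size (y :: l2)]/= in hUI hU.
have /hasP [[p p'] Hin /andP [Ap Bp]] :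
    has (predI A B) (consec (rcons l1 x) ++ consec (y :: l2)).
  by rewrite has_count count_cat; lia.
by exists p, p'.
Qed.

Lemma reroute_across_nonedge n (e : rel 'I_n) x y l1 l2 :
  symmetric e -> irreflexive e -> ~~ e x y -> n < deg e x + deg e y ->
  uniq (rcons l1 x ++ y :: l2) -> (forall z, z \in rcons l1 x ++ y :: l2) ->
  sorted e (rcons l1 x) -> sorted e (y :: l2) ->
  exists2 q, perm_eq q (rcons l1 x ++ y :: l2) &
    [/\ sorted e q, forall d, head d q = head d (rcons l1 x ++ y :: l2)
      & forall d, last d q = last d (rcons l1 x ++ y :: l2)].
Proof.
move=> sym irr nxy dxy U C S1 S2.
have [p [p' [Ap Bp]]] := crossing_pair irr U C dxy.
rewrite mem_cat => /orP[] /mem_consec [l [r E]].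
- have Lx : last p' r = x by have := congr1 (last x) E; rewrite last_rcons last_cat.
  have px : e p (last p' r) by rewrite Lx sym.
  have p'y : e p' y by rewrite sym.
  move: S1; rewrite E sorted_cat_cons /= => /andP [Sl /andP [_ Sr]].
  have [q Pq [Sq Hq Lq]] := two_opt sym Sl Sr S2 px p'y.
  have -> : (l ++ [:: p, p' & r]) ++ y :: l2 = rcons l p ++ (p' :: r) ++ y :: l2.
    by rewrite cat_rcons -catA.
  by exists q.
- case: l E => [[yp _]|y' l [_ E]]; first by rewrite yp Ap in nxy.
  have xp : e x (last y (rcons l p)) by rewrite last_rcons.
  move: S2; rewrite E -cat_cons sorted_cat_cons /= => /andP [Sl /andP [_ Sr]].
  have [q Pq [Sq Hq Lq]] := two_opt sym S1 Sl Sr xp Bp.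
  have -> : y :: l ++ [:: p, p' & r] = (y :: rcons l p) ++ p' :: r.
    by rewrite /= [rcons l p ++ _]cat_rcons.
  by exists q.
Qed.

Definition add_edge (T : eqType) (e : rel T) (x y : T) : rel T :=
  fun a b => e a b || (a == x) && (b == y) || (a == y) && (b == x).

Section AddEdge.

Variables (T : eqType) (e : rel T) (x y : T).

Lemma add_edge_sym : symmetric e -> symmetric (add_edge e x y).
Proof.
move=> sym a b; rewrite /add_edge sym; case: (e b a) => //=.
by rewrite orbC andbC [(b == y) && _]andbC.
Qed.

Lemma add_edgeC : add_edge e x y =2 add_edge e y x.
Proof. by move=> a b; rewrite /add_edge -orbA [_ && _ || _]orbC orbA. Qed.

Lemma sorted_add_edge_avoid s :
  sorted (add_edge e x y) s -> (x \notin s) || (y \notin s) -> sorted e s.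
Proof.
case: s => // a t /= P /orP[] nin.
  apply: (sub_in_path (P := predC1 x)) P; last by rewrite all_predC has_pred1.
  by move=> u w /= ux wx; rewrite /add_edge (negbTE ux) (negbTE wx) andbF !orbF.
apply: (sub_in_path (P := predC1 y)) P; last by rewrite all_predC has_pred1.
by move=> u w /= uy wy; rewrite /add_edge (negbTE uy) (negbTE wy) andbF !orbF.
Qed.

Lemma path_add_edge u s : path (add_edge e x y) u s ->
  [\/ path e u s, exists l1 l2, u :: s = rcons l1 x ++ y :: l2
    | exists l1 l2, u :: s = rcons l1 y ++ x :: l2].
Proof.
elim: s u => [|b t IH] u /=; first by constructor 1.
case/andP => eub P; case Eub : (e u b).
  case: (IH _ P) => [P'|[l1 [l2 E]]|[l1 [l2 E]]].
  - by constructor 1; rewrite P'.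
  - by constructor 2; exists (u :: l1), l2; rewrite E.
  - by constructor 3; exists (u :: l1), l2; rewrite E.
move: eub; rewrite /add_edge Eub /= => /orP[/andP[/eqP -> /eqP ->]|/andP[/eqP -> /eqP ->]].
  by constructor 2; exists [::], t.
by constructor 3; exists [::], t.
Qed.

End AddEdge.

Lemma ham_path_ext n (e1 e2 : rel 'I_n) u v s :
  e1 =2 e2 -> ham_path e1 u v s -> ham_path e2 u v s.
Proof. by move=> E [P L U C]; split => //; rewrite -(eq_path E). Qed.

Lemma ham_path_of_perm n (e : rel 'I_n) u s q :
  perm_eq q (u :: s) -> sorted e q -> head u q = u -> last u q = last u s ->
  uniq (u :: s) -> (forall z, z \in u :: s) -> ham_path e u (last u s) (behead q).
Proof.
case: q => [/perm_size //|u' s'] P S /= Hu; subst u'; move=> L U C; split => //.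
- by rewrite (perm_uniq P).
- by move=> z; rewrite (perm_mem P).
Qed.

Lemma ham_path_remove_edge n (e : rel 'I_n) x y u v s l1 l2 :
  symmetric e -> irreflexive e -> ~~ e x y -> n < deg e x + deg e y ->
  ham_path (add_edge e x y) u v s -> u :: s = rcons l1 x ++ y :: l2 ->
  exists s', ham_path e u v s'.
Proof.
move=> sym irr nxy dxy [P L U C] E.
have S' : sorted (add_edge e x y) (rcons l1 x ++ y :: l2) by rewrite -E.
rewrite cat_rcons sorted_cat_cons /= in S'; case/andP: S' => S1 /andP [_ S2].
have U' : uniq (rcons l1 x ++ y :: l2) by rewrite -E.
move: (U'); rewrite cat_uniq => /and3P [_ Nxy _].
have S1e : sorted e (rcons l1 x).
  by apply: (sorted_add_edge_avoid S1); rewrite (hasPn Nxy y) ?orbT // mem_head.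
have S2e : sorted e (y :: l2).
  apply: (@sorted_add_edge_avoid _ e x y (y :: l2) S2); apply/orP; left; apply/negP => xin.
  by move: (hasPn Nxy x xin); rewrite mem_rcons mem_head.
have C' z : z \in rcons l1 x ++ y :: l2 by rewrite -E.
have [q Pq [Sq Hq Lq]] := reroute_across_nonedge sym irr nxy dxy U' C' S1e S2e.
exists (behead q); rewrite -L.
by apply: ham_path_of_perm; rewrite ?E // ?Hq ?Lq -E.
Qed.

Lemma hamilton_connected_add_edge n (e : rel 'I_n) x y :
  symmetric e -> irreflexive e -> ~~ e x y -> n < deg e x + deg e y ->
  hamilton_connected (add_edge e x y) -> hamilton_connected e.
Proof.
move=> sym irr nxy dxy H u v uv.
have [s Hs] := H u v uv; have [P _ _ _] := Hs.
case: (path_add_edge P) => [Pe|[l1 [l2 E]]|[l1 [l2 E]]].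
- by exists s; case: Hs.
- exact: ham_path_remove_edge sym irr nxy dxy Hs E.
- apply: (ham_path_remove_edge (x := y) (y := x) sym irr _ _ _ E).
  + by rewrite sym.
  + by rewrite addnC.
  + exact: ham_path_ext (add_edgeC e x y) Hs.
Qed.

Lemma path_complete (T : eqType) (e : rel T) x s :
  (forall a b, a != b -> e a b) -> uniq (x :: s) -> path e x s.
Proof.
move=> He; elim: s x => [|y t IH] x //= /andP [xnin /andP [ynin Ut]].
rewrite He ?IH //=; first by rewrite ynin.
by move: xnin; rewrite inE negb_or => /andP [].
Qed.

Lemma complete_hamilton_connected n (e : rel 'I_n) :
  (forall a b, a != b -> e a b) -> hamilton_connected e.
Proof.
move=> He u v uv; set F := [seq w <- enum 'I_n | (w != u) && (w != v)].
have U : uniq (u :: F ++ [:: v]).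
  rewrite cons_uniq mem_cat mem_filter eqxx /= inE (negbTE uv) /=.
  by rewrite cat_uniq filter_uniq ?enum_uniq //= andbT orbF mem_filter eqxx andbF.
exists (F ++ [:: v]); split => //; last 2 first.
- by rewrite last_cat.
- move=> z; rewrite inE mem_cat mem_filter mem_enum inE andbT.
  by rewrite inE; case: (z =P u); case: (z =P v).
exact: path_complete.
Qed.

Definition nonedges n (e : rel 'I_n) := [set p : 'I_n * 'I_n | (p.1 != p.2) && ~~ e p.1 p.2].

Lemma deg_add_edge n (e : rel 'I_n) x y a : deg e a <= deg (add_edge e x y) a.
Proof. by apply: leq_sum => j _; rewrite /add_edge; case: (e a j). Qed.

Lemma ore_hamilton_connected n (e : rel 'I_n) : symmetric e -> irreflexive e ->
  (forall a b, a != b -> ~~ e a b -> n < deg e a + deg e b) -> hamilton_connected e.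
Proof.
have [k] := ubnP #|nonedges e|; elim: k e => // k IH e Hk sym irr Hdeg.
have [E0 | [[x y] Hxy]] := set_0Vmem (nonedges e).
  apply: complete_hamilton_connected => a b ab; apply/negPn/negP => nab.
  have : (a, b) \in nonedges e by rewrite inE /= ab nab.
  by rewrite E0 inE.
move: (Hxy); rewrite inE /= => /andP [xy nxy].
apply: (hamilton_connected_add_edge sym irr nxy (Hdeg x y xy nxy)).
have sub a b : e a b -> add_edge e x y a b by rewrite /add_edge => ->.
have irr' : irreflexive (add_edge e x y).
  move=> a; rewrite /add_edge irr /=.
  by apply/negP => /orP [] /andP [/eqP -> /eqP E]; rewrite E eqxx in xy.
have Hdeg' a b : a != b -> ~~ add_edge e x y a b ->
    n < deg (add_edge e x y) a + deg (add_edge e x y) b.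
  move=> ab nab; have nab0 : ~~ e a b by apply: contra nab; exact: sub.
  by have := Hdeg a b ab nab0; have := deg_add_edge e x y a; have := deg_add_edge e x y b; lia.
apply: IH (add_edge_sym x y sym) irr' Hdeg'.
rewrite ltnS in Hk; apply: leq_trans Hk; apply: proper_card; apply/properP; split.
  apply/subsetP => [[a b]]; rewrite !inE /= => /andP [-> nab] /=.
  by apply: contra nab; exact: sub.
by exists (x, y) => //; rewrite inE /= /add_edge !eqxx /= orbT andbF.
Qed.

Lemma perm_triple (T : finType) (x y z a b c : T) : x != y -> x != z -> y != z ->
  a != b -> a != c -> b != c -> exists f : {perm T}, [/\ f x = a, f y = b & f z = c].
Proof.
move=> xy xz yz ab ac bc.
pose p1 := tperm x a; pose p2 := tperm (p1 y) b; pose p3 := tperm (p2 (p1 z)) c.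
have e1 : p1 x = a by rewrite /p1 tpermL.
have y1a : p1 y != a by rewrite -e1 (inj_eq perm_inj) eq_sym.
have e2 : p2 (p1 y) = b by rewrite /p2 tpermL.
have e2a : p2 a = a by rewrite /p2 tpermD // eq_sym.
have z2a : p2 (p1 z) != a by rewrite -{1}e2a -e1 !(inj_eq perm_inj) eq_sym.
have z2b : p2 (p1 z) != b by rewrite -e2 !(inj_eq perm_inj) eq_sym.
exists (p1 * p2 * p3)%g; rewrite !permM; split.
- by rewrite e1 e2a /p3 tpermD // eq_sym.
- by rewrite e2 /p3 tpermD // eq_sym.
- by rewrite /p3 tpermL.
Qed.

Lemma isomorphic_Kn1ee n (e : rel 'I_n) x y z : symmetric e -> irreflexive e -> y != z ->
  (forall j, e x j = (j == y) || (j == z)) ->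
  (forall a b, a != x -> b != x -> a != b -> e a b) -> isomorphic e (@Kn1ee n).
Proof.
move=> sym irr yz Hx Hcl.
have xy : x != y by apply/eqP => E; have := Hx y; rewrite -E irr eqxx.
have xz : x != z by apply/eqP => E; have := Hx z; rewrite -E irr eqxx orbT.
have n3 : 2 < n.
  have := ltn_ord x; have := ltn_ord y; have := ltn_ord z.
  by move: xy xz yz; rewrite -!val_eqE /=; lia.
have o0 : 0 < n by lia.
have o1 : 1 < n by lia.
have om : n.-1 < n by lia.
pose w0 := Ordinal o0; pose w1 := Ordinal o1; pose wm := Ordinal om.
have [f [fx fy fz]] : exists f : {perm 'I_n}, [/\ f x = wm, f y = w0 & f z = w1].
  by apply: perm_triple => //; rewrite -val_eqE /=; lia.
have Fm a : (val (f a) == n.-1) = (a == x).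
  by rewrite -[n.-1]/(val wm) val_eqE -fx (inj_eq perm_inj).
have F2 a : (val (f a) < 2) = (a == y) || (a == z).
  rewrite -(inj_eq (@perm_inj _ f) a y) -(inj_eq (@perm_inj _ f) a z) fy fz -!val_eqE /=; lia.
exists f => a b; rewrite /Kn1ee (inj_eq (@perm_inj _ f)) Fm Fm F2 F2.
case: (a =P x) => [->|ax].
  rewrite Hx; case: (b =P y) => [->|_]; first by rewrite xy.
  by case: (b =P z) => [->|_]; [rewrite xz | rewrite andbF].
case: (b =P x) => [->|bx]; first by rewrite sym Hx; move/eqP: ax => ->.
case: (a =P b) => [->|ab]; first by rewrite irr.
by rewrite Hcl //; apply/eqP.
Qed.

Section DenseGraphs.

Variables (n : nat) (e : rel 'I_n).
Hypotheses (e_sym : symmetric e) (e_irr : irreflexive e).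

Lemma order_ge3 : n * n + 6 <= degsum e + 3 * n -> 2 < n.
Proof. by have := degsum_le e_irr; nia. Qed.

(* [degsum e + 3 * n = n * n + 6] says that G has C(n-1,2) + 2 edges, as many
   as K_{n-1}+e+e'; it is written this way to avoid truncated subtraction. *)
Lemma odd_degsum_add_3n : odd (degsum e + 3 * n) = odd (n * n).
Proof. by rewrite oddD (negbTE (degsum_even e_irr e_sym)) !oddM /=; case: (odd n). Qed.

Lemma degsum_add_3n_eq : n * n + 6 <= degsum e + 3 * n < n * n + 8 ->
  degsum e + 3 * n = n * n + 6.
Proof.
move=> /andP [lo hi]; have := odd_degsum_add_3n.
have [//|->] : degsum e + 3 * n = n * n + 6 \/ degsum e + 3 * n = (n * n + 6).+1 by lia.
by rewrite oddS oddD /= addbF; case: odd.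
Qed.

Lemma hamilton_connected_of_degsum : n * n + 8 <= degsum e + 3 * n -> hamilton_connected e.
Proof.
move=> Hbig; have n3 : 2 < n by apply: order_ge3; lia.
have i23 : (n - 2) * (n - 3) + 5 * n = n * n + 6 by nia.
apply: ore_hamilton_connected e_sym e_irr _ => a b ab nab.
by have := degsum_pair_bound e_irr e_sym ab; rewrite (negbTE nab); lia.
Qed.

Lemma deg_card z : deg e z = #|[set j | e z j]|.
Proof.
rewrite /deg cardsE -sum1_card [RHS]big_mkcond /=.
by apply: eq_bigr => j _; rewrite unfold_in; case: (e z j).
Qed.

Lemma isomorphic_Kn1ee_of_low_deg z :
  degsum e + 3 * n = n * n + 6 -> deg e z <= 2 -> isomorphic e (@Kn1ee n).
Proof.
move=> Htight dz; have n3 : 2 < n by apply: order_ge3; lia.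
have i12 : (n - 1) * (n - 2) + 3 * n = n * n + 2 by nia.
have dz2 : deg e z = 2 by have := degsum_vertex_bound e_irr e_sym z; lia.
have Hcl a b : a != z -> b != z -> a != b -> e a b.
  move=> az bz ab; apply/negPn/negP => nab.
  by have := degsum_vertex_bound_nonedge e_irr e_sym az bz ab nab; lia.
move: (deg_card z); rewrite dz2 => /esym/eqP/cards2P [y [y' [yy' Ez]]].
apply: isomorphic_Kn1ee e_sym e_irr yy' _ Hcl => j.
have : (j \in [set j | e z j]) = e z j by rewrite inE.
by rewrite Ez in_set2 => <-.
Qed.

Lemma tight_edge_in_triangle u w :
  degsum e + 3 * n = n * n + 6 -> e u w -> 0 < codeg e u w.
Proof.
move=> Htight uw; have n3 : 2 < n by apply: order_ge3; lia.
have i23 : (n - 2) * (n - 3) + 5 * n = n * n + 6 by nia.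
have uw' : u != w by apply: contraTneq uw => ->; rewrite e_irr.
have := degsum_pair_bound e_irr e_sym uw'; have := deg_add_deg_le_codeg u w e_sym.
by rewrite uw; lia.
Qed.

End DenseGraphs.

Local Open Scope ring_scope.

Lemma eigenvector_max_entry (R : realFieldType) n (e : rel 'I_n) (mu : R) :
  symmetric e -> eigenvalue (adjmx R e) mu ->
  exists2 x : 'I_n -> R, forall i, mu * x i = \sum_(k < n) (e i k)%:R * x k &
    exists2 u, x u != 0 & forall w, `|x w| <= `|x u|.
Proof.
move=> sym /eigenvalueP [v Ev v0]; exists (fun i => v 0 i).
  move=> i; have := congr1 (fun M : 'M[R]_(1, n) => M 0 i) Ev; rewrite !mxE /= => <-.
  by apply: eq_bigr => k _; rewrite mxE mulrC sym.
have [j0 vj0 | v_eq0] := pickP (fun j => v 0 j != 0); last first.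
  by case/negP: v0; apply/eqP/rowP => j; rewrite mxE; move/negbFE/eqP: (v_eq0 j).
have [u _ Hu] := @arg_maxP _ R _ j0 xpredT (fun i => `|v 0 i|) isT.
exists u => [|w]; last exact: Hu.
by rewrite -normr_gt0; apply: lt_le_trans (Hu j0 isT); rewrite normr_gt0.
Qed.

Section MaxEntry.

Variables (R : realDomainType) (n : nat) (e : rel 'I_n) (x : 'I_n -> R) (mu : R).
Hypothesis x_eigen : forall i, mu * x i = \sum_(k < n) (e i k)%:R * x k.

Lemma eigen_sq_entry u : mu ^+ 2 * x u = \sum_(w < n) (codeg e u w)%:R * x w.
Proof.
rewrite expr2 -mulrA x_eigen mulr_sumr.
under eq_bigr do rewrite mulrCA x_eigen mulr_sumr.
rewrite exchange_big /=; apply: eq_bigr => w _.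
by rewrite /codeg natr_sum mulr_suml; apply: eq_bigr => k _; rewrite natrM mulrA.
Qed.

(* Evaluate (A^2 - cA) x = (mu^2 - c mu) x at an entry of maximal modulus;
   this needs the row of A^2 - cA at u to be nonnegative. *)
Lemma max_entry_eigen_bound u c : x u != 0 -> (forall w, `|x w| <= `|x u|) ->
  (forall w, c * (e u w)%:R <= (codeg e u w)%:R) ->
  mu ^+ 2 - c * mu <= (nbr_degsum e u)%:R - c * (deg e u)%:R.
Proof.
move=> xu0 Hmax Hc; pose M w := (codeg e u w)%:R - c * (e u w)%:R : R.
have sumM : \sum_(w < n) M w = (nbr_degsum e u)%:R - c * (deg e u)%:R.
  by rewrite sumrB -mulr_sumr -!natr_sum sum_codeg.
have eqM : (mu ^+ 2 - c * mu) * x u = \sum_(w < n) M w * x w.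
  rewrite mulrBl eigen_sq_entry -mulrA x_eigen mulr_sumr -sumrB.
  by apply: eq_bigr => w _; rewrite mulrBl mulrA.
have xu2 : 0 < x u * x u by rewrite -expr2 exprn_even_gt0.
rewrite -(ler_pM2r xu2) -sumM mulrA eqM !mulr_suml; apply: ler_sum => w _.
rewrite -mulrA ler_wpM2l ?subr_ge0 //; apply: le_trans (ler_norm _) _.
have -> : x u * x u = `|x u| * `|x u| by rewrite -normrM ger0_norm ?ltW.
by rewrite normrM ler_wpM2r.
Qed.

End MaxEntry.

Lemma spectral_threshold_sq (R : rcfType) (N mu : R) :
  - (1 / 2%:R) + Num.sqrt ((N - 3%:R / 2%:R) ^+ 2 + 2%:R) < mu ->
  N ^+ 2 - 3 * N + 4 < mu ^+ 2 + mu.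
Proof.
set a := (N - 3%:R / 2%:R) ^+ 2 + 2%:R => H.
have a0 : 0 <= a by rewrite addr_ge0 // sqr_ge0.
have s0 := sqrtr_ge0 a; have s2 := sqr_sqrtr a0.
have : Num.sqrt a ^+ 2 < (mu + 1 / 2%:R) ^+ 2.
  by rewrite -subr_gt0 subr_sqr; apply: mulr_gt0; lra.
by rewrite s2 /a; nra.
Qed.

Lemma threshold_sub2 (R : realFieldType) (N mu : R) : 5 <= N ->
  N ^+ 2 - 3 * N + 4 < mu ^+ 2 + mu -> N ^+ 2 - 6 * N + 9 < mu ^+ 2 - 2 * mu.
Proof.
move=> N5 h; rewrite ltNge; apply/negP => h'.
have h1 : N - 5 / 3 < mu by nra.
have h2 : N - 8 / 3 < mu - 1 by lra.
have h3 : 0 < N - 8 / 3 by lra.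
nra.
Qed.

Lemma threshold_sub1 (R : realFieldType) (N mu : R) : 5 <= N ->
  N ^+ 2 - 3 * N + 4 < mu ^+ 2 + mu -> N ^+ 2 - 5 * N + 7 < mu ^+ 2 - mu.
Proof.
move=> N5 h; rewrite ltNge; apply/negP => h'.
have h1 : N - 3 / 2 < mu by nra.
have h2 : 0 < N - 5 / 2 by lra.
nra.
Qed.

Section SpectralGraph.

Variables (R : realFieldType) (n : nat) (e : rel 'I_n) (mu : R).
Hypotheses (e_sym : symmetric e) (e_irr : irreflexive e).
Hypothesis mu_eigen : eigenvalue (adjmx R e) mu.
Hypothesis mu_large : n%:R ^+ 2 - 3 * n%:R + 4 < mu ^+ 2 + mu.

Lemma degsum_ge_of_spectral : (n * n + 6 <= degsum e + 3 * n)%N.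
Proof.
have [x x_eigen [u xu0 x_max]] := eigenvector_max_entry e_sym mu_eigen.
have Hc w : -1 * (e u w)%:R <= (codeg e u w)%:R :> R.
  by rewrite mulN1r (le_trans (_ : _ <= 0)) // oppr_le0.
have := max_entry_eigen_bound x_eigen xu0 x_max Hc; rewrite !mulN1r !opprK -natrD => bound.
have := nbr_degsum_add_deg_le e_irr u; rewrite -(ler_nat R) => hs.
have lt4 : (n * n + 4 < degsum e + 3 * n)%N.
  by rewrite -(ltr_nat R) !natrD !natrM; move: mu_large; rewrite expr2; lra.
have := odd_degsum_add_3n e_sym e_irr.
have [//|->] : (n * n + 6 <= degsum e + 3 * n \/ degsum e + 3 * n = (n * n + 4).+1)%N by lia.
by rewrite oddS oddD /= addbF; case: odd.
Qed.

Section ExtremalVertex.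

Variables (x : 'I_n -> R) (u : 'I_n).
Hypothesis x_eigen : forall i, mu * x i = \sum_(k < n) (e i k)%:R * x k.
Hypotheses (xu0 : x u != 0) (x_max : forall w, `|x w| <= `|x u|).
Hypothesis tight : (degsum e + 3 * n = n * n + 6)%N.
Hypothesis min_deg3 : forall k, (3 <= deg e k)%N.

Lemma spectral_bound_universal : deg e u = n.-1 ->
  mu ^+ 2 - 2 * mu <= n%:R ^+ 2 - 6 * n%:R + 9.
Proof.
move=> Hu; have Hall k : k != u -> e u k.
  by move=> ku; apply/negPn/negP => /(deg_nonadj_le e_irr ku); rewrite Hu; lia.
have Hc w : 2 * (e u w)%:R <= (codeg e u w)%:R :> R.
  rewrite -natrM ler_nat; have := codeg_universal e_irr e_sym w Hall; have := min_deg3 w.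
  by case: (e u w) => /=; lia.
have := max_entry_eigen_bound x_eigen xu0 x_max Hc.
have := nbr_degsum_universal e_irr Hall => hs.
have : (nbr_degsum e u + 6 * n)%:R = (n * n + 9 + 2 * deg e u)%:R :> R.
  by congr _%:R; have := ltn_ord u; lia.
by rewrite !natrD !natrM expr2; lra.
Qed.

Lemma spectral_bound_nonuniversal : deg e u != n.-1 ->
  mu ^+ 2 - mu <= n%:R ^+ 2 - 5 * n%:R + 7.
Proof.
move=> Hu; have Hc w : 1 * (e u w)%:R <= (codeg e u w)%:R :> R.
  rewrite mul1r ler_nat; case uw : (e u w) => //.
  exact: (tight_edge_in_triangle e_sym e_irr tight uw).
have := max_entry_eigen_bound x_eigen xu0 x_max Hc.
have := nbr_degsum_nonuniversal e_irr u min_deg3; have := deg_le_pred e_irr u => hd hs.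
have : (nbr_degsum e u + 5 * n)%:R <= (n * n + 7 + deg e u)%:R :> R.
  by rewrite ler_nat; move/eqP: Hu; lia.
by rewrite !natrD !natrM expr2 !mul1r; lra.
Qed.

End ExtremalVertex.

Lemma tight_min_deg3_absurd :
  (degsum e + 3 * n = n * n + 6)%N -> (forall k, 3 <= deg e k)%N -> False.
Proof.
move=> tight min_deg3.
have N5 : 5 <= n%:R :> R.
  by rewrite (ler_nat R 5 n); have := degsum_ge min_deg3; have := degsum_le e_irr; nia.
have [x x_eigen [u xu0 x_max]] := eigenvector_max_entry e_sym mu_eigen.
have [Hu|Hu] := eqVneq (deg e u) n.-1.
- have := spectral_bound_universal x_eigen xu0 x_max tight min_deg3 Hu.
  by rewrite leNgt threshold_sub2.
- have := spectral_bound_nonuniversal x_eigen xu0 x_max tight min_deg3 Hu.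
  by rewrite leNgt threshold_sub1.
Qed.

End SpectralGraph.

Theorem theorem3p1 (R : rcfType) (n : nat) (e : rel 'I_n) (mu : R) :
  simple_graph e ->
  largest_eigenvalue (adjmx R e) mu ->
  - (1 / 2%:R) + Num.sqrt ((n%:R - 3%:R / 2%:R) ^+ 2 + 2%:R) < mu ->
  hamilton_connected e \/ isomorphic e (@Kn1ee n).
Proof.
move=> [sym irr] [eig _] /spectral_threshold_sq mu_large.
have lo := degsum_ge_of_spectral sym irr eig mu_large.
have [hi|hi] := leqP (n * n + 8) (degsum e + 3 * n).
  by left; exact: hamilton_connected_of_degsum sym irr hi.
have tight := degsum_add_3n_eq sym irr (introT andP (conj lo hi)).
have [z dz|min_deg3] := pickP (fun z => deg e z <= 2)%N.
  by right; exact: (isomorphic_Kn1ee_of_low_deg sym irr tight dz).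
exfalso; apply: tight_min_deg3_absurd sym irr eig mu_large tight _ => k.
by rewrite ltnNge min_deg3.
Qed.
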